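(* Let $G$ be a claw-free graph and $C$ an even hole of length $2k$ with $k>2$, labelled $C=\mathbf{b}_0-\mathbf{a}_0-\mathbf{b}_1-\mathbf{a}_1-\dots-\mathbf{b}_{k-1}-\mathbf{a}_{k-1}-\mathbf{b}_0$. Let $\mathbf{s}\notin C$ with $\Gamma_C(\mathbf{s})=\{\mathbf{b}_0,\mathbf{a}_0,\mathbf{b}_1\}$. If a vertex $\mathbf{t}\notin C\cup\{\mathbf{s}\}$ is adjacent to exactly one of $\mathbf{s},\mathbf{a}_0$, then $\mathbf{t}$ is adjacent to exactly one of $\mathbf{b}_0,\mathbf{b}_1$.
   Context: A hole is an induced cycle of length at least 4; an even hole has even length. Claw-free: no induced $K_{1,3}$. $\Gamma_C(\mathbf{s})$ is the set of neighbours of $\mathbf{s}$ in $C$. *)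

From mathcomp Require Import all_boot.
Set Implicit Arguments. Unset Strict Implicit. Unset Printing Implicit Defensive.

Definition simple_graph (T : finType) (e : rel T) : Prop :=
  symmetric e /\ irreflexive e.

Definition claw_free (T : finType) (e : rel T) : Prop :=
  forall x y1 y2 y3 : T,
    e x y1 -> e x y2 -> e x y3 ->
    y1 != y2 -> y1 != y3 -> y2 != y3 ->
    e y1 y2 || e y1 y3 || e y2 y3.

Definition cyc_adj (n : nat) (i j : 'I_n) : bool :=
  (j == (i.+1 %% n) :> nat) || (i == (j.+1 %% n) :> nat).

Definition induced_cycle (T : finType) (e : rel T) (n : nat) (c : 'I_n -> T) : Prop :=
  injective c /\ forall i j : 'I_n, e (c i) (c j) = cyc_adj i j.

Definition hole (T : finType) (e : rel T) (n : nat) (c : 'I_n -> T) : Prop :=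
  4 <= n /\ induced_cycle e c.

Definition exactly_one (p q : bool) : bool := p (+) q.

From mathcomp Require Import all_boot.
From mathcomp Require Import zify.

Set Implicit Arguments.
Unset Strict Implicit.
Unset Printing Implicit Defensive.

(* Write b0 - a0 - b1 - a1 for the start of the hole and a' for its last vertex
   a_(k-1).  The vertices s and a0 play symmetric roles: both see b0 and b1,
   while a' (resp. a1) is a neighbour of b0 (resp. b1) that sees neither of
   them.  Let p be the one of s, a0 that t sees and q the other.  The claw at p
   forces t onto b0 or b1.  If t saw both, the claws at b0 and b1 (centred there,
   with leaves q, t and a', resp. a1) would force t onto a' and a1, and then
   t, p, a', a1 would be a claw. *)

Section ClawFree.

Variables (T : finType) (e : rel T).
Hypotheses (e_sym : symmetric e) (e_cf : claw_free e).

Lemma adj_neq z a b : e a z -> ~~ e b z -> a != b.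
Proof. by move=> haz; apply: contraNneq => <-. Qed.

Lemma claw_free_nbr_edge x y1 y2 y3 :
  e x y1 -> e x y2 -> e x y3 -> y1 != y2 -> y1 != y3 -> y2 != y3 ->
  ~~ e y1 y2 -> ~~ e y1 y3 -> e y2 y3.
Proof.
move=> h1 h2 h3 d12 d13 d23 /negbTE n12 /negbTE n13.
by have := e_cf h1 h2 h3 d12 d13 d23; rewrite n12 n13.
Qed.

Lemma claw_free_exactly_one p q u w x y t :
  e p u -> e p w -> e q u -> e q w -> ~~ e u w ->
  e x u -> ~~ e x w -> ~~ e x p -> ~~ e x q ->
  e y w -> ~~ e y u -> ~~ e y p -> ~~ e y q -> ~~ e x y ->
  e t p -> ~~ e t q -> t != q ->
  exactly_one (e t u) (e t w).
Proof.
move=> pu pw qu qw uw xu xw xp xq yw yu yp yq xy tp tq tNq.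
have uNt : u != t by apply: (adj_neq _ tq); rewrite e_sym.
have wNt : w != t by apply: (adj_neq _ tq); rewrite e_sym.
have uNw : u != w by apply: (adj_neq (z := x)); rewrite e_sym.
have tu_or_tw : e t u || e t w.
  apply: contraNT uw; rewrite negb_or => /andP[ntu ntw].
  apply: (@claw_free_nbr_edge p t u w) ntu ntw => //; by rewrite 1?e_sym 1?eq_sym.
rewrite /exactly_one; move: tu_or_tw.
case tu: (e t u); case tw: (e t w) => //= _.
have tx : e t x.
  rewrite e_sym; apply: (@claw_free_nbr_edge u q x t); rewrite 1?e_sym //.
  - exact: adj_neq qw xw.
  - by rewrite eq_sym.
  - by rewrite eq_sym; apply: adj_neq tp xp.
have ty : e t y.
  rewrite e_sym; apply: (@claw_free_nbr_edge w q y t); rewrite 1?e_sym //.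
  - exact: adj_neq qu yu.
  - by rewrite eq_sym.
  - by rewrite eq_sym; apply: adj_neq tp yp.
have xNy : x != y by apply: adj_neq xu yu.
have xNp : x != p by rewrite eq_sym; apply: adj_neq pw xw.
have yNp : y != p by rewrite eq_sym; apply: adj_neq pu yu.
by have := e_cf tx ty tp xNy xNp yNp; rewrite (negbTE xy) (negbTE xp) (negbTE yp).
Qed.

End ClawFree.

Lemma cyc_adjE n (i j : 'I_n) : 2 < n ->
  cyc_adj i j = [|| val j == (val i).+1, val i == (val j).+1,
                    (val i == n.-1) && (val j == 0) |
                    (val j == n.-1) && (val i == 0)].
Proof.
move=> n_gt2; rewrite /cyc_adj.
have succ_mod a : a < n -> a.+1 %% n = if a.+1 == n then 0 else a.+1.
  by move=> a_lt; case: eqP => [->|?]; rewrite ?modnn ?modn_small //; lia.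
rewrite !succ_mod //; case: i j => [i i_lt] [j j_lt] /=.
by case: ifP => /eqP; case: ifP => /eqP; lia.
Qed.

Theorem corollary3 (T : finType) (e : rel T) (k : nat)
  (c : 'I_(2 * k) -> T) (s t : T)
  (Hg : simple_graph e) (Hcf : claw_free e) (Hk : 2 < k)
  (Hhole : hole e c)
  (Hs : forall i : 'I_(2 * k), s != c i)
  (HsN : forall i : 'I_(2 * k), e s (c i) = (val i \in [:: 0; 1; 2]))
  (Ht : forall i : 'I_(2 * k), t != c i) (Hts : t != s)
  (i0 i1 i2 : 'I_(2 * k)) (Hi0 : val i0 = 0) (Hi1 : val i1 = 1) (Hi2 : val i2 = 2)
  (Hta : exactly_one (e t s) (e t (c i1))) :
  exactly_one (e t (c i0)) (e t (c i2)).
Proof.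
have lt3 : 3 < 2 * k by lia.
have lt_last : (2 * k).-1 < 2 * k by lia.
pose i3 := Ordinal lt3; pose ilast := Ordinal lt_last.
case: Hg => e_sym _; case: Hhole => _ [_ c_adj].
have adjE i j := etrans (c_adj i j) (@cyc_adjE _ i j ltac:(lia)).
have cs i : e (c i) s = (val i \in [:: 0; 1; 2]) by rewrite e_sym HsN.
move: Hta; rewrite {1}/exactly_one; case ts: (e t s); case ta: (e t (c i1)) => //= _.
- apply: (@claw_free_exactly_one _ e e_sym Hcf s (c i1) _ _ (c ilast) (c i3));
  by rewrite ?ts ?ta ?Ht ?HsN ?cs ?adjE ?Hi0 ?Hi1 ?Hi2 ?inE //=; lia.
- apply: (@claw_free_exactly_one _ e e_sym Hcf (c i1) s _ _ (c ilast) (c i3));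
  by rewrite ?ts ?ta ?Hts ?HsN ?cs ?adjE ?Hi0 ?Hi1 ?Hi2 ?inE //=; lia.
Qed.
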